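(* Let $A$ be a locale and let $Q$ be an equivariantly supported reflexive based quantal frame with base locale $A$ which has a multiplicative unit. If $Q$ satisfies the inverse law, then it satisfies the unit laws.
   Context: An $A$-$A$-bimodule is a sup-lattice $M$ with actions $a\triangleright m$, $m\triangleleft a$ preserving joins in each variable, with $1_A\triangleright m=m$, $(a\wedge b)\triangleright m=a\triangleright(b\triangleright m)$, $m\triangleleft1_A=m$, $m\triangleleft(a\wedge b)=(m\triangleleft a)\triangleleft b$, $(a\triangleright m)\triangleleft b=a\triangleright(m\triangleleft b)$. An $A$-$A$-quantale is such a $Q$ with associative join-preserving multiplication and $(a\triangleright x)y=a\triangleright(xy)$, $(x\triangleleft a)y=x(a\triangleright y)$, $(xy)\triangleleft a=x(y\triangleleft a)$; involutive if there is a join-preserving $x\mapsto x^*$ with $x^{**}=x$, $(xy)^*=y^*x^*$, $(a\triangleright(x\triangleleft b))^*=b\triangleright(x^*\triangleleft a)$. $1_Q$ is the top. A support is a join-preserving $\varsigma:Q\to A$ with $\varsigma(1_Q)=1_A$, $\varsigma(x)\triangleright y\le xx^*y$, $\varsigma(x)\triangleright x=x$; equivariant if $\varsigma(a\triangleright x)=a\wedge\varsigma(x)$. A based quantal frame is an involutive $A$-$A$-quantale which is a frame with $(a\triangleright x)\wedge y=a\triangleright(x\wedge y)$, $(x\triangleleft a)\wedge y=(x\wedge y)\triangleleft a$; reflexive: a frame homomorphism $\upsilon:Q\to A$ with $\upsilon(a\triangleright1_Q)=a=\upsilon(1_Q\triangleleft a)$. Inverse law: $\upsilon(a)\triangleright1_Q=\bigvee_{xy^*\le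 a}x\wedge y$ for all $a\in Q$. Unit laws: $\bigvee_{xy\le a}\upsilon(x)\triangleright y=a$ for all $a\in Q$. *)

Set Implicit Arguments.

(* A frame (= the frame of opens of a locale): a partial order with all joins
   (given as an operation on subsets) and binary meets, with meets
   distributing over arbitrary joins. *)
Record Frame := MkFrame {
  car :> Type;
  le : car -> car -> Prop;
  sup : (car -> Prop) -> car;
  meet : car -> car -> car;
  le_refl : forall x, le x x;
  le_trans : forall x y z, le x y -> le y z -> le x z;
  le_antisym : forall x y, le x y -> le y x -> x = y;
  sup_ub : forall (S : car -> Prop) x, S x -> le x (sup S);
  sup_least : forall (S : car -> Prop) y, (forall x, S x -> le x y) -> le (sup S) y;
  meet_glb : forall x y z, le z (meet x y) <-> (le z x /\ le z y);
  meet_sup_distr : forall a (S : car -> Prop),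
      meet a (sup S) = sup (fun z => exists s, S s /\ z = meet a s)
}.

Arguments le {f} _ _.
Arguments sup {f} _.
Arguments meet {f} _ _.

Definition top (F : Frame) : F := sup (fun _ : F => True).

Definition image {X Y : Type} (f : X -> Y) (S : X -> Prop) : Y -> Prop :=
  fun y => exists x, S x /\ y = f x.

Definition preserves_joins {F G : Frame} (f : F -> G) : Prop :=
  forall S : F -> Prop, f (sup S) = sup (image f S).

Definition frame_hom {F G : Frame} (f : F -> G) : Prop :=
  preserves_joins f /\ f (top F) = top G /\
  forall x y, f (meet x y) = meet (f x) (f y).

(* Q is an involutive A-A-quantale (with actions lact = |>, ract = <|,
   multiplication mul, involution inv) which is a based quantal frame. *)
Record based_quantal_frame {A Q : Frame}
    (lact : A -> Q -> Q) (ract : Q -> A -> Q)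
    (mul : Q -> Q -> Q) (inv : Q -> Q) : Prop := {
  lact_joins_l : forall x : Q, preserves_joins (fun a : A => lact a x);
  lact_joins_r : forall a : A, preserves_joins (lact a);
  ract_joins_l : forall a : A, preserves_joins (fun x : Q => ract x a);
  ract_joins_r : forall x : Q, preserves_joins (ract x);
  lact_one : forall x, lact (top A) x = x;
  lact_meet : forall a b x, lact (meet a b) x = lact a (lact b x);
  ract_one : forall x, ract x (top A) = x;
  ract_meet : forall a b x, ract x (meet a b) = ract (ract x a) b;
  lact_ract : forall a b x, ract (lact a x) b = lact a (ract x b);
  mul_assoc : forall x y z, mul (mul x y) z = mul x (mul y z);
  mul_joins_l : forall y : Q, preserves_joins (fun x : Q => mul x y);
  mul_joins_r : forall x : Q, preserves_joins (mul x);
  mul_lact : forall a x y, mul (lact a x) y = lact a (mul x y);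
  mul_ract_lact : forall a x y, mul (ract x a) y = mul x (lact a y);
  mul_ract : forall a x y, ract (mul x y) a = mul x (ract y a);
  inv_joins : preserves_joins inv;
  inv_inv : forall x, inv (inv x) = x;
  inv_mul : forall x y, inv (mul x y) = mul (inv y) (inv x);
  inv_act : forall a b x, inv (lact a (ract x b)) = lact b (ract (inv x) a);
  lact_meet_frame : forall a x y, meet (lact a x) y = lact a (meet x y);
  ract_meet_frame : forall a x y, meet (ract x a) y = ract (meet x y) a
}.

Definition is_support {A Q : Frame} (lact : A -> Q -> Q)
    (mul : Q -> Q -> Q) (inv : Q -> Q) (sigma : Q -> A) : Prop :=
  preserves_joins sigma /\ sigma (top Q) = top A /\
  (forall x y, le (lact (sigma x) y) (mul (mul x (inv x)) y)) /\
  (forall x, lact (sigma x) x = x).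

Definition equivariant {A Q : Frame} (lact : A -> Q -> Q) (sigma : Q -> A) : Prop :=
  forall a x, sigma (lact a x) = meet a (sigma x).

Definition is_reflexive {A Q : Frame} (lact : A -> Q -> Q) (ract : Q -> A -> Q)
    (upsilon : Q -> A) : Prop :=
  frame_hom upsilon /\
  forall a : A, upsilon (lact a (top Q)) = a /\ upsilon (ract (top Q) a) = a.

Definition has_mult_unit {Q : Frame} (mul : Q -> Q -> Q) : Prop :=
  exists e : Q, forall x, mul e x = x /\ mul x e = x.

Definition inverse_law {A Q : Frame} (lact : A -> Q -> Q)
    (mul : Q -> Q -> Q) (inv : Q -> Q) (upsilon : Q -> A) : Prop :=
  forall a : Q, lact (upsilon a) (top Q)
    = sup (fun z => exists x y, le (mul x (inv y)) a /\ z = meet x y).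

Definition unit_laws {A Q : Frame} (lact : A -> Q -> Q)
    (mul : Q -> Q -> Q) (upsilon : Q -> A) : Prop :=
  forall a : Q, sup (fun z => exists x y, le (mul x y) a /\ z = lact (upsilon x) y) = a.

(* Fix a left unit e.  Since e e* = e, the inverse law puts e = e /\ e below
   upsilon(e) |> 1, so upsilon(e) |> 1 = upsilon(e) |> (e 1) = (upsilon(e) |> e) 1 = 1,
   and reflexivity gives upsilon(e) = 1; taking x = e, y = a in the unit law
   yields the inequality a <= \/ {upsilon(x) |> y | x y <= a}.  Conversely,
   by the inverse law upsilon(x) |> y is the join of the w = y /\ u /\ v with
   u v* <= x, and the support makes every element stable, w <= w w* w, whence
   w <= u v* y <= x y. *)

Section FrameTheory.
Context {F : Frame}.

Lemma meet_le_l (x y : F) : le (meet x y) x.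
Proof. exact (proj1 (proj1 (meet_glb F x y (meet x y)) (le_refl F _))). Qed.

Lemma meet_le_r (x y : F) : le (meet x y) y.
Proof. exact (proj2 (proj1 (meet_glb F x y (meet x y)) (le_refl F _))). Qed.

Lemma le_meet (x y z : F) : le z x -> le z y -> le z (meet x y).
Proof. intros Hx Hy; apply (meet_glb F); auto. Qed.

Lemma meetC (x y : F) : meet x y = meet y x.
Proof. apply le_antisym; apply le_meet; auto using meet_le_l, meet_le_r. Qed.

Lemma meet_idPr (x y : F) : le y x -> meet x y = y.
Proof.
  intros Hyx; apply le_antisym; [apply meet_le_r | apply le_meet; auto using le_refl].
Qed.

Lemma meetxx (x : F) : meet x x = x.
Proof. apply meet_idPr, le_refl. Qed.

Lemma le_top (x : F) : le x (top F).
Proof. apply sup_ub; exact I. Qed.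

Lemma sup_pair (x y : F) : le x y -> sup (fun z => z = x \/ z = y) = y.
Proof.
  intros Hxy; apply le_antisym.
  - apply sup_least; intros z [-> | ->]; auto using le_refl.
  - apply sup_ub; auto.
Qed.

End FrameTheory.

Lemma preserves_joins_mono {F G : Frame} (f : F -> G) :
  preserves_joins f -> forall x y, le x y -> le (f x) (f y).
Proof.
  intros Hf x y Hxy; rewrite <- (sup_pair x y Hxy), Hf.
  apply sup_ub; exists x; auto.
Qed.

Section BasedQuantalFrame.
Context {A Q : Frame} {lact : A -> Q -> Q} {ract : Q -> A -> Q}
  {mul : Q -> Q -> Q} {inv : Q -> Q}.
Hypothesis BQF : based_quantal_frame lact ract mul inv.

Lemma mul_le x x' y y' : le x x' -> le y y' -> le (mul x y) (mul x' y').
Proof.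
  intros Hx Hy; apply le_trans with (mul x' y).
  - exact (preserves_joins_mono _ (mul_joins_l BQF y) _ _ Hx).
  - exact (preserves_joins_mono _ (mul_joins_r BQF x') _ _ Hy).
Qed.

Lemma inv_le x y : le x y -> le (inv x) (inv y).
Proof. exact (preserves_joins_mono _ (inv_joins BQF) x y). Qed.

Lemma meet_lact_top a y : meet (lact a (top Q)) y = lact a y.
Proof. rewrite (lact_meet_frame BQF), meet_idPr by apply le_top; reflexivity. Qed.

Lemma inv_left_unit e : (forall x, mul e x = x) -> inv e = e.
Proof.
  intros He.
  pose proof (f_equal inv (He (inv e))) as Hinv.
  rewrite (inv_mul BQF), !(inv_inv BQF), He in Hinv.
  exact Hinv.
Qed.

Lemma support_stable {sigma : Q -> A} : is_support lact mul inv sigma ->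
  forall x, le x (mul (mul x (inv x)) x).
Proof.
  intros [_ [_ [Hle Hfix]]] x.
  apply le_trans with (lact (sigma x) x); [rewrite Hfix; apply le_refl | apply Hle].
Qed.

Section InverseLaw.
Context {upsilon sigma : Q -> A}.
Hypothesis Hsupport : is_support lact mul inv sigma.
Hypothesis Hinverse : inverse_law lact mul inv upsilon.

Lemma lact_upsilon_le_mul x y : le (lact (upsilon x) y) (mul x y).
Proof.
  rewrite <- meet_lact_top, Hinverse, meetC, (meet_sup_distr Q).
  apply sup_least; intros z [s [[u [v [Huv ->]]] ->]].
  set (w := meet y (meet u v)).
  assert (Hwy : le w y) by apply meet_le_l.
  assert (Hwu : le w u) by (apply le_trans with (meet u v); [apply meet_le_r | apply meet_le_l]).
  assert (Hwv : le w v) by (apply le_trans with (meet u v); apply meet_le_r).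
  apply le_trans with (mul (mul w (inv w)) w); [exact (support_stable Hsupport w) |].
  apply mul_le; auto.
  apply le_trans with (mul u (inv v)); auto.
  apply mul_le; auto using inv_le.
Qed.

Lemma upsilon_left_unit e : is_reflexive lact ract upsilon ->
  (forall x, mul e x = x) -> upsilon e = top A.
Proof.
  intros [[_ [Htop _]] Hrefl] He.
  assert (He_le : le e (lact (upsilon e) (top Q))).
  { rewrite Hinverse; apply sup_ub; exists e, e; split.
    - rewrite (inv_left_unit _ He), He; apply le_refl.
    - symmetry; apply meetxx. }
  assert (Hfix_e : lact (upsilon e) e = e).
  { rewrite <- meet_lact_top; apply meet_idPr, He_le. }
  assert (Hfix_top : lact (upsilon e) (top Q) = top Q).
  { rewrite <- (He (top Q)), <- (mul_lact BQF), Hfix_e; reflexivity. }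
  rewrite <- (proj1 (Hrefl (upsilon e))), Hfix_top; exact Htop.
Qed.

End InverseLaw.
End BasedQuantalFrame.

Theorem corollary5p12 (A Q : Frame)
    (lact : A -> Q -> Q) (ract : Q -> A -> Q)
    (mul : Q -> Q -> Q) (inv : Q -> Q) (upsilon : Q -> A) :
  based_quantal_frame lact ract mul inv ->
  is_reflexive lact ract upsilon ->
  (exists sigma : Q -> A, is_support lact mul inv sigma /\ equivariant lact sigma) ->
  has_mult_unit mul ->
  inverse_law lact mul inv upsilon ->
  unit_laws lact mul upsilon.
Proof.
  intros BQF Hrefl [sigma [Hsupport _]] [e He] Hinverse a.
  pose proof (upsilon_left_unit BQF Hinverse e Hrefl (fun x => proj1 (He x))) as Hunit.
  apply le_antisym.
  - apply sup_least; intros z [x [y [Hxy ->]]].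
    apply le_trans with (mul x y); [| exact Hxy].
    exact (lact_upsilon_le_mul BQF Hsupport Hinverse x y).
  - apply sup_ub; exists e, a; split.
    + rewrite (proj1 (He a)); apply le_refl.
    + rewrite Hunit; symmetry; apply (lact_one BQF).
Qed.
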